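(* Let $\mathcal{X},\mathcal{Y},\mathcal{U},\mathcal{Z}$ be finite sets, let $(X,Y)\in\mathcal{X}\times\mathcal{Y}$ have joint distribution $P_{X,Y}$ with $P_X$ and $P_Y$ of full support, and let $f:\mathcal{X}\times\mathcal{Y}\to\mathcal{U}$ and $g:\mathcal{Y}\to\mathcal{Z}$ be deterministic functions. Let $R^*$ be the optimal zero-error rate and $G_{[n]}$ the $n$-th characteristic graph (both defined in the context). Then $$R^*=\lim_{n\to\infty}\frac{1}{n}H_\chi(G_{[n]}).$$
   Context: Setting: $(X^n,Y^n)$ denotes $n$ i.i.d. copies of $(X,Y)$, with distribution $P^n_{X,Y}$. An encoder observes $X^n$ and $(g(Y_t))_{t\le n}$; a decoder observes $Y^n$ and must recover $(f(X_t,Y_t))_{t\le n}$. Let $\{0,1\}^*$ be the set of finite binary words and $l(\cdot)$ the length of a word. An $(n,R_n)$-zero-error source code is a pair $\phi_e:\mathcal{X}^n\times\mathcal{Z}^n\to\{0,1\}^*$, $\phi_d:\mathcal{Y}^n\times\{0,1\}^*\to\mathcal{U}^n$ such that (1) $\phi_e(\mathcal{X}^n\times\mathcal{Z}^n)$ is prefix-free; (2) $R_n=\frac1n\mathbb{E}[l(\phi_e(X^n,(g(Y_t))_{t\le n}))]$; (3) for all $(x^n,y^n)\in\operatorname{supp}P^n_{X,Y}$, $\phi_d(y^n,\phi_e(x^n,(g(y_t))_{t\le n}))=(f(x_t,y_t))_{t\le n}$. A rate $R$ is achievable if there is a sequence of $(n,R_n)$-zero-error codes with $\lim_n R_n=R$;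 $R^*=\inf\{R\ge0: R\text{ achievable}\}$. A probabilistic graph is a triple $(\mathcal{V},\mathcal{E},P_V)$ with vertex set $\mathcal{V}$, edge set $\mathcal{E}$ and a distribution $P_V$ on $\mathcal{V}$. A subset $\mathcal{S}\subseteq\mathcal{V}$ is independent if no two of its vertices are adjacent; a map $c:\mathcal{V}\to\mathcal{C}$ into a finite set is a coloring if every $c^{-1}(i)$ is independent. The chromatic entropy is $H_\chi(G)=\inf\{H(c(V)): c\text{ a coloring of }G\}$, where $V\sim P_V$. The characteristic graph $G_{[n]}$ has vertex set $\mathcal{X}^n\times\mathcal{Z}^n$ with distribution $P^n_{X,g(Y)}$ (the law of $(X^n,(g(Y_t))_{t\le n})$), and $(x^n,z^n)$, $(x'^n,z'^n)$ are adjacent iff $z^n=z'^n$ and there is $y^n\in\mathcal{Y}^n$ with $g(y_t)=z_t$ for all $t$ such that $P_{X,Y}(x_t,y_t)P_{X,Y}(x'_t,y_t)>0$ for all $t\le n$ and $f(x_t,y_t)\ne f(x'_t,y_t)$ for some $t\le n$. *)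

From HB Require Import structures.
From mathcomp Require Import all_boot all_order all_algebra.
From mathcomp Require Import all_classical all_reals all_analysis.
Set Implicit Arguments. Unset Strict Implicit. Unset Printing Implicit Defensive.
Import Order.TTheory GRing.Theory Num.Theory.
Import numFieldNormedType.Exports.
Local Open Scope classical_set_scope.
Local Open Scope ring_scope.

Section Defs.
Variable R : realType.

Definition log2 (x : R) : R := ln x / ln 2.

(* Shannon entropy (base 2) of a distribution q on a finite type,
   with the convention 0 log 0 = 0 *)
Definition entropy (T : finType) (q : T -> R) : R :=
  - \sum_(t : T | 0 < q t) q t * log2 (q t).

Definition is_joint_dist (X Y : finType) (P : X -> Y -> R) : Prop :=
  (forall x y, 0 <= P x y) /\ \sum_(x : X) \sum_(y : Y) P x y = 1.

Definition marginalX (X Y : finType) (P : X -> Y -> R) (x : X) : R :=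
  \sum_(y : Y) P x y.
Definition marginalY (X Y : finType) (P : X -> Y -> R) (y : Y) : R :=
  \sum_(x : X) P x y.

Definition prodP (X Y : finType) (P : X -> Y -> R) (n : nat)
  (xn : n.-tuple X) (yn : n.-tuple Y) : R :=
  \prod_(t < n) P (tnth xn t) (tnth yn t).

Definition independent (V : finType) (E : V -> V -> Prop) (S : {set V}) : Prop :=
  forall v w, v \in S -> w \in S -> ~ E v w.

Definition is_coloring (V C : finType) (E : V -> V -> Prop) (c : V -> C) : Prop :=
  forall i : C, independent E [set v | c v == i].

Definition push (V C : finType) (PV : V -> R) (c : V -> C) (i : C) : R :=
  \sum_(v : V | c v == i) PV v.

Definition chromatic_entropy (V : finType) (E : V -> V -> Prop) (PV : V -> R) : R :=
  inf [set h : R | exists (C : finType) (c : V -> C),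
         is_coloring E c /\ h = entropy (push PV c)].

Section Source.
Variables (X Y U Z : finType) (P : X -> Y -> R) (f : X -> Y -> U) (g : Y -> Z).

Definition gmap (n : nat) (yn : n.-tuple Y) : n.-tuple Z := map_tuple g yn.
Definition fmap (n : nat) (xn : n.-tuple X) (yn : n.-tuple Y) : n.-tuple U :=
  [tuple f (tnth xn t) (tnth yn t) | t < n].

Definition prefix_free_image (D : Type) (phi_e : D -> seq bool) : Prop :=
  forall a b, prefix (phi_e a) (phi_e b) -> phi_e a = phi_e b.

Definition is_zero_error_code (n : nat)
  (phi_e : n.-tuple X * n.-tuple Z -> seq bool)
  (phi_d : n.-tuple Y -> seq bool -> n.-tuple U) : Prop :=
  prefix_free_image phi_e /\
  (forall (xn : n.-tuple X) (yn : n.-tuple Y), 0 < prodP P xn yn ->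
     phi_d yn (phi_e (xn, gmap yn)) = fmap xn yn).

Definition code_rate (n : nat) (phi_e : n.-tuple X * n.-tuple Z -> seq bool) : R :=
  (n%:R)^-1 * \sum_(xn : n.-tuple X) \sum_(yn : n.-tuple Y)
                 prodP P xn yn * (size (phi_e (xn, gmap yn)))%:R.

Definition achievable (r : R) : Prop :=
  exists (phi_e : forall n, n.-tuple X * n.-tuple Z -> seq bool)
         (phi_d : forall n, n.-tuple Y -> seq bool -> n.-tuple U),
    (forall n, is_zero_error_code (phi_e n) (phi_d n)) /\
    (fun n => code_rate (phi_e n)) @ \oo --> r.

Definition optimal_rate : R := inf [set r : R | 0 <= r /\ achievable r].

Definition char_adj (n : nat) (v w : n.-tuple X * n.-tuple Z) : Prop :=
  v.2 = w.2 /\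
  exists yn : n.-tuple Y, gmap yn = v.2 /\
    (forall t : 'I_n, 0 < P (tnth v.1 t) (tnth yn t) * P (tnth w.1 t) (tnth yn t)) /\
    (exists t : 'I_n, f (tnth v.1 t) (tnth yn t) != f (tnth w.1 t) (tnth yn t)).

Definition char_dist (n : nat) (v : n.-tuple X * n.-tuple Z) : R :=
  \sum_(yn : n.-tuple Y | gmap yn == v.2) prodP P v.1 yn.

Definition char_graph_entropy (n : nat) : R :=
  chromatic_entropy (@char_adj n) (@char_dist n).

End Source.
End Defs.

(* A zero-error code gives different codewords to adjacent vertices of G_[n], so its
   codewords color G_[n]; by Kraft's and Gibbs' inequalities its expected length is at
   least H_chi(G_[n]).  Conversely, a near-optimal coloring c of G_[n] becomes a zero-error
   code through a Shannon code for c(V): a color of probability q gets an index of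
   floor(-log2 q) + 1 bits, preceded by this length; since every positive probability is
   at least p_min^n these lengths are O(n), so the header costs O(log n) bits.  Hence the
   optimal n-block expected length is H_chi(G_[n]) + O(log n).  Finally H_chi(G_[n]) is
   subadditive (colorings of G_[m] and G_[n] pair up into a coloring of G_[m+n], and entropy
   adds on product distributions), so by Fekete's lemma H_chi(G_[n]) / n converges, and its
   limit is both a lower bound on achievable rates and achievable. *)

From Pilot Require Import Defs.
From HB Require Import structures.
From mathcomp Require Import all_boot all_order all_algebra.
From mathcomp Require Import all_classical all_reals all_analysis.
From mathcomp Require Import ring lra zify.
Set Implicit Arguments. Unset Strict Implicit. Unset Printing Implicit Defensive.
Import Order.TTheory GRing.Theory Num.Theory.
Import numFieldNormedType.Exports.
Local Open Scope classical_set_scope.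
Local Open Scope ring_scope.

Section Fekete.
Variables (R : realType) (a : nat -> R).
Hypothesis a_ge0 : forall n, 0 <= a n.
Hypothesis a_subadd : forall m n, a (m + n)%N <= a m + a n.

Lemma subadditive_mul_add k q r : a (q * k + r)%N <= q%:R * a k + a r.
Proof.
elim: q => [|q IH]; first by rewrite mul0n add0n mul0r add0r.
rewrite mulSn -addnA (le_trans (a_subadd _ _)) // -natr1 mulrDl mul1r.
by move: IH; lra.
Qed.

Lemma subadditive_avg_le k n : (0 < k)%N -> (0 < n)%N ->
  n%:R^-1 * a n <= a k / k%:R + (\sum_(r < k) a r) / n%:R.
Proof.
move=> k_gt0 n_gt0; have n_pos : 0 < n%:R :> R by rewrite ltr0n.
have rem_le : a (n %% k)%N <= \sum_(r < k) a r.
  by rewrite (bigD1 (Ordinal (ltn_pmod n k_gt0))) //= lerDl sumr_ge0.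
have quo_le : (n %/ k)%:R * a k <= n%:R * (a k / k%:R).
  rewrite mulrCA [leLHS]mulrC ler_wpM2l // ler_pdivlMr ?ltr0n // -natrM ler_nat.
  exact: leq_trunc_div.
have := subadditive_mul_add k (n %/ k) (n %% k); rewrite -divn_eq => an_le.
rewrite mulrC ler_pdivrMr // mulrDl divfK ?gt_eqF // [_ * n%:R]mulrC.
move: an_le quo_le rem_le.
set x := (n %/ k)%:R * _; set y := n%:R * _; set z := a (n %% k)%N; lra.
Qed.

Lemma fekete :
  (fun n => n%:R^-1 * a n) @ \oo --> inf (range (fun m : nat => a m.+1 / m.+1%:R)).
Proof.
set S := range _; set L := inf S.
have S_lb : has_lbound S by exists 0 => _ [m _ <-]; rewrite divr_ge0.
have S_n0 : S !=set0 by exists (a 1%N / 1%:R), 0%N.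
apply/cvgrPdist_lt => e e_gt0; have e2_gt0 : 0 < e / 2 by rewrite divr_gt0.
have [_ [m _ <-] am_lt] : exists2 y, S y & y < L + e / 2.
  by apply: inf_lt => //; rewrite ltrDl.
set M := \sum_(r < m.+1) a r.
near=> n.
have n_gt0 : (0 < n)%N by near: n; exists 1%N.
have M_small : M / n%:R < e / 2.
  rewrite ltr_pdivrMr ?ltr0n // -ltr_pdivrMl // mulrC.
  near: n; exists (Num.truncn (M / (e / 2))).+1 => // n /= n_ge.
  by rewrite -truncn_lt_nat ?divr_ge0 ?sumr_ge0 // ltW.
have L_le : L <= n%:R^-1 * a n.
  by apply: ge_inf => //; exists n.-1 => //; rewrite prednK // mulrC.
have := subadditive_avg_le (ltn0Sn m) n_gt0.
rewrite distrC ger0_norm ?subr_ge0 // -/M.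
move: L_le am_lt M_small.
set x := n%:R^-1 * a n; set y := a m.+1 / _; set z := M / _; lra.
Unshelve. all: end_near.
Qed.

End Fekete.

Section Entropy.
Variable R : realType.

Lemma ln_le_subr1 (x : R) : 0 < x -> ln x <= x - 1.
Proof.
move=> x_gt0; have := @le_ln1Dx R (x - 1); rewrite [1 + _]addrC subrK; apply.
by rewrite ltrBrDl subrr.
Qed.

Lemma ln2_gt0 : 0 < ln (2 : R).
Proof. by apply: ln_gt0; rewrite ltr1n. Qed.

Lemma log2M (x y : R) : 0 < x -> 0 < y -> log2 (x * y) = log2 x + log2 y.
Proof. by move=> x_gt0 y_gt0; rewrite /log2 lnM ?posrE // mulrDl. Qed.

Lemma log2_exp2V (k : nat) : log2 ((2 : R) ^+ k)^-1 = - k%:R.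
Proof.
rewrite /log2 lnV ?posrE ?exprn_gt0 // lnXn // -mulr_natr.
by field; rewrite mul1r gt_eqF // ln2_gt0.
Qed.

Lemma log2_le0 (x : R) : x <= 1 -> log2 x <= 0.
Proof. by move=> x_le1; rewrite /log2 pmulr_lle0 ?invr_gt0 ?ln2_gt0 // ln_le0. Qed.

Definition xlog2x (x : R) := if 0 < x then x * log2 x else 0.

Lemma entropyE (T : finType) (q : T -> R) : entropy q = - \sum_t xlog2x (q t).
Proof. by rewrite /entropy big_mkcond. Qed.

Lemma xlog2xM (x y : R) : 0 <= x -> 0 <= y -> xlog2x (x * y) = x * xlog2x y + y * xlog2x x.
Proof.
rewrite le_eqVlt => /predU1P[<- _|x_gt0]; first by rewrite !mul0r add0r /xlog2x ltxx mulr0.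
rewrite le_eqVlt => /predU1P[<-|y_gt0]; first by rewrite !mulr0 mul0r addr0 /xlog2x ltxx mulr0.
by rewrite /xlog2x mulr_gt0 // x_gt0 y_gt0 log2M //; ring.
Qed.

Lemma entropy_prod (A B : finType) (q1 : A -> R) (q2 : B -> R) :
  (forall a, 0 <= q1 a) -> (forall b, 0 <= q2 b) ->
  \sum_a q1 a = 1 -> \sum_b q2 b = 1 ->
  entropy (fun p : A * B => q1 p.1 * q2 p.2) = entropy q1 + entropy q2.
Proof.
move=> q1_ge0 q2_ge0 q1_sum q2_sum; rewrite !entropyE -opprD; congr (- _).
rewrite -(pair_bigA _ (fun a b => xlog2x (q1 a * q2 b))) /=.
under eq_bigr => a _ do under eq_bigr => b _ do rewrite xlog2xM //.
under eq_bigr => a _ do rewrite big_split /= -big_distrr /= -big_distrl /= q2_sum mul1r.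
by rewrite big_split /= -big_distrl /= q1_sum mul1r addrC.
Qed.

Lemma entropy_ge0 (T : finType) (q : T -> R) : (forall t, 0 <= q t <= 1) -> 0 <= entropy q.
Proof.
move=> q01; rewrite /entropy oppr_ge0 sumr_le0 // => t q_gt0.
by rewrite pmulr_rle0 // log2_le0 //; case/andP: (q01 t).
Qed.

(* [ln (w / q) <= w / q - 1], multiplied by [q / ln 2]. *)
Lemma xlog2x_ge (q w : R) : 0 <= q -> 0 < w ->
  - xlog2x q <= q * - log2 w + (w - q) / ln 2.
Proof.
move=> q_ge0 w_gt0; have ln2_pos := ln2_gt0.
rewrite /xlog2x; case: ifPn => [q_gt0|]; last first.
  rewrite -leNgt => q_le0; have -> : q = 0 by apply/le_anti/andP.
  by rewrite oppr0 mul0r add0r addr0 divr_ge0 ?ltW.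
have key : q * ln (w / q) <= w - q.
  have := ln_le_subr1 (divr_gt0 w_gt0 q_gt0); rewrite -(ler_pM2l q_gt0).
  by rewrite mulrBr mulr1 mulrCA divff ?gt_eqF // mulr1.
rewrite ln_div ?posrE // in key.
rewrite /log2 -subr_ge0.
have -> : q * - (ln w / ln 2) + (w - q) / ln 2 - - (q * (ln q / ln 2)) =
    (w - q - q * (ln w - ln q)) / ln 2 by field; rewrite gt_eqF.
by apply: divr_ge0; rewrite ?subr_ge0 // ltW.
Qed.

Lemma gibbs (T : finType) (q w : T -> R) :
  (forall t, 0 <= q t) -> \sum_t q t = 1 -> (forall t, 0 < w t) -> \sum_t w t <= 1 ->
  entropy q <= \sum_t q t * - log2 (w t).
Proof.
move=> q_ge0 q_sum w_gt0 w_sum; rewrite entropyE -sumrN.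
apply: le_trans (ler_sum _ (fun t _ => xlog2x_ge (q_ge0 t) (w_gt0 t))) _.
rewrite big_split /= gerDl -big_distrl /= pmulr_lle0 ?invr_gt0 ?ln2_gt0 //.
by rewrite sumrB q_sum subr_le0.
Qed.

End Entropy.

Definition prefix_free (s : seq (seq bool)) := {in s &, forall a b, prefix a b -> a = b}.

Section Branch.
Variable s : seq (seq bool).
Hypothesis s_uniq : uniq s.
Hypothesis s_pf : prefix_free s.
Hypothesis nil_notin_s : [::] \notin s.

Definition branch (b : bool) := [seq behead w | w <- s & head false w == b].

Lemma branch_cons b w : w \in s -> head false w == b -> w = b :: behead w.
Proof. by case: w => [|x w] /=; [rewrite (negPf nil_notin_s) | move=> _ /eqP ->]. Qed.

Lemma branch_uniq b : uniq (branch b).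
Proof.
rewrite map_inj_in_uniq ?filter_uniq // => v w.
rewrite !mem_filter => /andP[v_b v_s] /andP[w_b w_s] eq_vw.
by rewrite (branch_cons v_s v_b) (branch_cons w_s w_b) eq_vw.
Qed.

Lemma branch_prefix_free b : prefix_free (branch b).
Proof.
move=> _ _ /mapP[v + ->] /mapP[w + ->]; rewrite !mem_filter => /andP[v_b v_s] /andP[w_b w_s].
move=> vw; have := s_pf v_s w_s.
by rewrite (branch_cons v_s v_b) (branch_cons w_s w_b) /= eqxx => /(_ vw) [].
Qed.

Lemma size_branch b N : {in s, forall w, size w <= N.+1}%N ->
  {in branch b, forall w, size w <= N}%N.
Proof.
move=> s_size _ /mapP[w + ->]; rewrite mem_filter => /andP[w_b w_s].
by have := s_size w w_s; rewrite (branch_cons w_s w_b).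
Qed.

Lemma sum_branch b N : {in s, forall w, size w <= N.+1}%N ->
  (\sum_(w <- s | head false w == b) 2 ^ (N.+1 - size w) =
   \sum_(w <- branch b) 2 ^ (N - size w))%N.
Proof.
move=> s_size; rewrite big_map big_filter big_seq_cond [RHS]big_seq_cond.
apply: eq_bigr => w /andP[w_s w_b].
by rewrite {1}(branch_cons w_s w_b) subSS.
Qed.

End Branch.

Lemma kraft_nat N (s : seq (seq bool)) : uniq s -> prefix_free s ->
  {in s, forall w, size w <= N}%N -> (\sum_(w <- s) 2 ^ (N - size w) <= 2 ^ N)%N.
Proof.
elim: N s => [|N IH] s s_uniq s_pf s_size.
  have s_nil w : w \in s -> w = [::] by move/s_size; case: w.
  rewrite (eq_big_seq (fun _ => 1%N)) ?sum1_size => [|w /s_nil -> //].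
  by apply: (uniq_leq_size (s2 := [:: [::]])) => // w /s_nil ->; rewrite inE.
have [nil_s|nil_notin_s] := boolP ([::] \in s).
  have s_nil w : w \in s -> w = [::] by move=> w_s; apply/esym/s_pf; rewrite ?prefix0s.
  rewrite (eq_big_seq (fun _ => 2 ^ N.+1)%N) => [|w /s_nil -> //].
  rewrite big_const_seq count_predT iter_addn_0 -[leqRHS]muln1 leq_mul2l.
  by rewrite (uniq_leq_size (s2 := [:: [::]])) ?orbT // => w /s_nil ->; rewrite inE.
rewrite (bigID (fun w => head false w == true)) /= expnS mul2n -addnn.
rewrite [X in (_ + X <= _)%N](eq_bigl (fun w => head false w == false)) => [|w]; last first.
  by case: (head false w).
rewrite !(sum_branch nil_notin_s) //.
apply: leq_add; apply: IH;
  by [apply: branch_uniq | apply: branch_prefix_free | apply: size_branch].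
Qed.

Lemma kraft (R : numFieldType) (s : seq (seq bool)) : uniq s -> prefix_free s ->
  \sum_(w <- s) ((2 : R) ^+ size w)^-1 <= 1.
Proof.
move=> s_uniq s_pf; set N := \max_(w <- s) size w.
have s_size : {in s, forall w, size w <= N}%N.
  by move=> w w_s; rewrite /N (big_rem w w_s) /= leq_maxl.
have N_pos : 0 < (2 : R) ^+ N by rewrite exprn_gt0.
have -> : \sum_(w <- s) ((2 : R) ^+ size w)^-1 =
    (\sum_(w <- s) 2 ^ (N - size w))%N%:R / (2 : R) ^+ N.
  rewrite natr_sum big_distrl /= big_seq [RHS]big_seq; apply: eq_bigr => w w_s.
  by rewrite natrX -{2}(subnK (s_size w w_s)) exprD invfM mulrA divff ?mul1r // gt_eqF.
by rewrite ler_pdivrMr // mul1r -natrX ler_nat kraft_nat.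
Qed.

Lemma entropy_le_mean_length (R : realType) (T : finType) (q : T -> R) (w : T -> seq bool) :
  (forall t, 0 <= q t) -> \sum_t q t = 1 -> injective w -> prefix_free (codom w) ->
  entropy q <= \sum_t q t * (size (w t))%:R.
Proof.
move=> q_ge0 q_sum w_inj w_pf.
have kraft_w : \sum_t ((2 : R) ^+ size (w t))^-1 <= 1.
  have codom_uniq : uniq (codom w) by apply/injectiveP.
  have := kraft R codom_uniq w_pf.
  by rewrite big_map big_enum.
apply: le_trans (gibbs q_ge0 q_sum _ kraft_w) _ => [t|].
  by rewrite invr_gt0 exprn_gt0.
by under eq_bigr do rewrite log2_exp2V opprK.
Qed.

Section ChromaticEntropy.
Variables (R : realType) (V : finType) (E : V -> V -> Prop) (PV : V -> R).
Hypothesis PV_ge0 : forall v, 0 <= PV v.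
Hypothesis PV_sum : \sum_v PV v = 1.

Lemma push_ge0 (C : finType) (c : V -> C) i : 0 <= push PV c i.
Proof. exact: sumr_ge0. Qed.

Lemma sum_push_mul (C : finType) (c : V -> C) (F : C -> R) :
  \sum_i push PV c i * F i = \sum_v PV v * F (c v).
Proof.
rewrite [RHS](partition_big c xpredT) //=; apply: eq_bigr => i _.
by rewrite /push big_distrl /=; apply: eq_bigr => v /eqP <-.
Qed.

Lemma sum_push (C : finType) (c : V -> C) : \sum_i push PV c i = 1.
Proof.
under eq_bigr do rewrite -[push _ _ _]mulr1.
by rewrite sum_push_mul -[RHS]PV_sum; apply: eq_bigr => v _; rewrite mulr1.
Qed.

Lemma push_le1 (C : finType) (c : V -> C) i : push PV c i <= 1.
Proof.
by rewrite -(sum_push c) (bigD1 i) //= lerDl sumr_ge0 // => j _; apply: push_ge0.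
Qed.

Lemma entropy_push_ge0 (C : finType) (c : V -> C) : 0 <= entropy (push PV c).
Proof. by apply: entropy_ge0 => i; rewrite push_ge0 push_le1. Qed.

Let colorings_entropy := [set h : R | exists (C : finType) (c : V -> C),
  is_coloring E c /\ h = entropy (push PV c)].

Lemma colorings_entropy_lbound : lbound colorings_entropy 0.
Proof. by move=> _ [C [c [_ ->]]]; apply: entropy_push_ge0. Qed.

Lemma chromatic_entropy_le (C : finType) (c : V -> C) : is_coloring E c ->
  chromatic_entropy E PV <= entropy (push PV c).
Proof.
move=> c_col; apply: ge_inf; first by exists 0; apply: colorings_entropy_lbound.
by exists C, c.
Qed.

Hypothesis E_irrefl : forall v, ~ E v v.

Lemma id_coloring : is_coloring E id.
Proof. by move=> i v w; rewrite !inE => /eqP -> /eqP ->; apply: E_irrefl. Qed.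

Lemma chromatic_entropy_ge0 : 0 <= chromatic_entropy E PV.
Proof.
apply: lb_le_inf; last exact: colorings_entropy_lbound.
by exists (entropy (push PV id)), V, id; split => //; apply: id_coloring.
Qed.

Lemma chromatic_entropy_approx e : 0 < e -> exists (C : finType) (c : V -> C),
  is_coloring E c /\ entropy (push PV c) < chromatic_entropy E PV + e.
Proof.
move=> e_gt0.
have [_ [C [c [c_col ->]]] lt] : exists2 h, colorings_entropy h & h < inf colorings_entropy + e.
  apply: inf_lt; last by rewrite ltrDl.
  by exists (entropy (push PV id)), V, id; split => //; apply: id_coloring.
by exists C, c.
Qed.

End ChromaticEntropy.

Section TupleSplit.
Variables (T : Type) (m n : nat).

Definition ltuple (t : (m + n).-tuple T) : m.-tuple T := [tuple tnth t (lshift n i) | i < m].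
Definition rtuple (t : (m + n).-tuple T) : n.-tuple T := [tuple tnth t (rshift m i) | i < n].

Lemma ltuple_cat (t1 : m.-tuple T) (t2 : n.-tuple T) : ltuple [tuple of t1 ++ t2] = t1.
Proof. by apply: eq_from_tnth => i; rewrite tnth_mktuple tnth_lshift. Qed.

Lemma rtuple_cat (t1 : m.-tuple T) (t2 : n.-tuple T) : rtuple [tuple of t1 ++ t2] = t2.
Proof. by apply: eq_from_tnth => i; rewrite tnth_mktuple tnth_rshift. Qed.

Lemma cat_lrtuple (t : (m + n).-tuple T) : [tuple of ltuple t ++ rtuple t] = t.
Proof.
apply: eq_from_tnth => i; case: (splitP i) => [j|k] i_eq.
  by rewrite (_ : i = lshift n j) ?tnth_lshift ?tnth_mktuple //; apply: val_inj.
by rewrite (_ : i = rshift m k) ?tnth_rshift ?tnth_mktuple //; apply: val_inj.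
Qed.

End TupleSplit.

Lemma map_ltuple (T T' : Type) m n (h : T -> T') (t : (m + n).-tuple T) :
  map_tuple h (ltuple t) = ltuple (map_tuple h t).
Proof. by apply: eq_from_tnth => i; rewrite tnth_map !tnth_mktuple tnth_map. Qed.

Lemma map_rtuple (T T' : Type) m n (h : T -> T') (t : (m + n).-tuple T) :
  map_tuple h (rtuple t) = rtuple (map_tuple h t).
Proof. by apply: eq_from_tnth => i; rewrite tnth_map !tnth_mktuple tnth_map. Qed.

Lemma eq_cat_tuple (T : eqType) m n (t1 u1 : m.-tuple T) (t2 u2 : n.-tuple T) :
  ([tuple of t1 ++ t2] == [tuple of u1 ++ u2]) = (t1 == u1) && (t2 == u2).
Proof.
apply/eqP/andP => [eq_cat|[/eqP-> /eqP->] //].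
split; apply/eqP; first by rewrite -(ltuple_cat t1 t2) eq_cat ltuple_cat.
by rewrite -(rtuple_cat t1 t2) eq_cat rtuple_cat.
Qed.

Lemma sum_pair (R : nmodType) (A B : finType) (F : A * B -> R) :
  \sum_(p : A * B) F p = \sum_a \sum_b F (a, b).
Proof. by rewrite pair_big; apply: eq_bigr => -[]. Qed.

Lemma sum_tuple_cat (R : nmodType) (T : finType) m n (F : (m + n).-tuple T -> R) :
  \sum_(t : (m + n).-tuple T) F t =
  \sum_(t1 : m.-tuple T) \sum_(t2 : n.-tuple T) F [tuple of t1 ++ t2].
Proof.
rewrite pair_big /= (reindex (fun p : m.-tuple T * n.-tuple T => [tuple of p.1 ++ p.2])) //.
exists (fun t => (ltuple t, rtuple t)) => [[t1 t2] _|t _] /=.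
  by rewrite ltuple_cat rtuple_cat.
by rewrite cat_lrtuple.
Qed.

Lemma sum_tuple_prod (R : comPzSemiRingType) (T : finType) n (F : 'I_n -> T -> R) :
  \sum_(t : n.-tuple T) \prod_(i < n) F i (tnth t i) = \prod_(i < n) \sum_(x : T) F i x.
Proof.
rewrite bigA_distr_bigA /= (reindex (fun f : {ffun 'I_n -> T} => [tuple f i | i < n])) /=.
  by apply: eq_bigr => f _; apply: eq_bigr => i _; rewrite tnth_mktuple.
exists (fun t : n.-tuple T => [ffun i => tnth t i]) => [f _|t _] /=.
  by apply/ffunP => i; rewrite ffunE tnth_mktuple.
by apply: eq_from_tnth => i; rewrite tnth_mktuple ffunE.
Qed.

Section Source.
Variables (R : realType) (X Y U Z : finType) (P : X -> Y -> R) (f : X -> Y -> U) (g : Y -> Z).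
Hypothesis P_ge0 : forall x y, 0 <= P x y.
Hypothesis P_sum : \sum_x \sum_y P x y = 1.

Local Notation V n := (n.-tuple X * n.-tuple Z)%type.

Lemma prodP_ge0 n (xn : n.-tuple X) yn : 0 <= prodP P xn yn.
Proof. by apply: prodr_ge0 => i _. Qed.

Lemma prodP_gt0 n (xn : n.-tuple X) yn :
  0 < prodP P xn yn <-> forall t, 0 < P (tnth xn t) (tnth yn t).
Proof.
split=> [xy_gt0 t|xy_gt0]; last by apply: prodr_gt0 => t _.
rewrite lt_neqAle P_ge0 andbT; apply: contraTneq xy_gt0 => P0.
by rewrite /prodP (bigD1 t) //= -P0 mul0r ltxx.
Qed.

Lemma sum_prodP n : \sum_(xn : n.-tuple X) \sum_(yn : n.-tuple Y) prodP P xn yn = 1.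
Proof.
under eq_bigr => xn _ do rewrite /prodP (sum_tuple_prod (fun t y => P (tnth xn t) y)).
rewrite (sum_tuple_prod (fun t x => \sum_y P x y)).
by rewrite (eq_bigr (fun _ => 1)) ?prodr_const ?expr1n // => i _; rewrite -P_sum.
Qed.

Lemma char_dist_ge0 n (v : V n) : 0 <= char_dist P g v.
Proof. by apply: sumr_ge0 => yn _; apply: prodP_ge0. Qed.

Lemma sum_char_dist_mul n (F : V n -> R) :
  \sum_(xn : n.-tuple X) \sum_(yn : n.-tuple Y) prodP P xn yn * F (xn, gmap g yn) =
  \sum_(v : V n) char_dist P g v * F v.
Proof.
rewrite sum_pair; apply: eq_bigr => xn _.
under [RHS]eq_bigr => zn _ do rewrite /char_dist /= big_distrl /= big_mkcond /=.
rewrite exchange_big /=; apply: eq_bigr => yn _.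
rewrite (bigD1 (gmap g yn)) //= eqxx big1 ?addr0 // => zn /negPf zn_neq.
by rewrite eq_sym zn_neq.
Qed.

Lemma sum_char_dist n : \sum_(v : V n) char_dist P g v = 1.
Proof.
under eq_bigr do rewrite -[char_dist _ _ _]mulr1.
rewrite -[RHS](sum_prodP n) -(sum_char_dist_mul (fun _ => 1)).
by apply: eq_bigr => xn _; apply: eq_bigr => yn _; rewrite mulr1.
Qed.

Lemma char_dist_gt0 n (v : V n) yn : gmap g yn = v.2 -> 0 < prodP P v.1 yn ->
  0 < char_dist P g v.
Proof.
move=> g_yn xy_gt0; apply: lt_le_trans xy_gt0 _.
by rewrite /char_dist (bigD1 yn) ?g_yn //= lerDl sumr_ge0 // => y _; apply: prodP_ge0.
Qed.

Definition vertex_cat m n (v1 : V m) (v2 : V n) : V (m + n) :=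
  ([tuple of v1.1 ++ v2.1], [tuple of v1.2 ++ v2.2]).
Definition lvertex m n (v : V (m + n)) : V m := (ltuple v.1, ltuple v.2).
Definition rvertex m n (v : V (m + n)) : V n := (rtuple v.1, rtuple v.2).

Lemma lvertex_cat m n (v1 : V m) (v2 : V n) : lvertex (vertex_cat v1 v2) = v1.
Proof. by case: v1 => x z; rewrite /lvertex /= !ltuple_cat. Qed.

Lemma rvertex_cat m n (v1 : V m) (v2 : V n) : rvertex (vertex_cat v1 v2) = v2.
Proof. by case: v2 => x z; rewrite /rvertex /= !rtuple_cat. Qed.

Lemma sum_vertex_cat m n (F : V (m + n) -> R) :
  \sum_(v : V (m + n)) F v = \sum_(v1 : V m) \sum_(v2 : V n) F (vertex_cat v1 v2).
Proof.
rewrite sum_pair sum_tuple_cat.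
under eq_bigr => x1 _ do under eq_bigr => x2 _ do rewrite sum_tuple_cat.
rewrite sum_pair; apply: eq_bigr => x1 _; under [RHS]eq_bigr do rewrite sum_pair.
by rewrite exchange_big.
Qed.

Lemma prodP_cat m n (x1 : m.-tuple X) (x2 : n.-tuple X) (y1 : m.-tuple Y) (y2 : n.-tuple Y) :
  prodP P [tuple of x1 ++ x2] [tuple of y1 ++ y2] = prodP P x1 y1 * prodP P x2 y2.
Proof.
rewrite /prodP big_split_ord /=.
by congr (_ * _); apply: eq_bigr => i _; rewrite ?tnth_lshift ?tnth_rshift.
Qed.

Lemma char_dist_cat m n (v1 : V m) (v2 : V n) :
  char_dist P g (vertex_cat v1 v2) = char_dist P g v1 * char_dist P g v2.
Proof.
rewrite /char_dist big_mkcond sum_tuple_cat /=.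
rewrite [in RHS]big_mkcond [X in _ = _ * X]big_mkcond big_distrl /=.
apply: eq_bigr => y1 _; rewrite big_distrr /=; apply: eq_bigr => y2 _.
have -> : gmap g [tuple of y1 ++ y2] = [tuple of gmap g y1 ++ gmap g y2].
  by apply: val_inj; rewrite /= map_cat.
rewrite eq_cat_tuple prodP_cat.
by case: (gmap g y1 == v1.2); case: (gmap g y2 == v2.2); rewrite ?mulr0 ?mul0r.
Qed.

Lemma char_adj_irrefl n (v : V n) : ~ char_adj P f g v v.
Proof. by move=> [_ [yn [_ [_ [t]]]]]; rewrite eqxx. Qed.

Lemma char_adj_split m n (v w : V (m + n)) : char_adj P f g v w ->
  char_adj P f g (lvertex v) (lvertex w) \/ char_adj P f g (rvertex v) (rvertex w).
Proof.
move=> [z_eq [yn [g_yn [xy_gt0 [t f_neq]]]]]; case: (splitP t) => [j|k] t_eq.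
- left; split; first by rewrite /lvertex /= z_eq.
  exists (ltuple yn); split; first by rewrite /gmap map_ltuple -/(gmap g yn) g_yn.
  split=> [i|]; first by rewrite !tnth_mktuple; apply: xy_gt0.
  by exists j; rewrite !tnth_mktuple (_ : lshift n j = t) //; apply: val_inj.
- right; split; first by rewrite /rvertex /= z_eq.
  exists (rtuple yn); split; first by rewrite /gmap map_rtuple -/(gmap g yn) g_yn.
  split=> [i|]; first by rewrite !tnth_mktuple; apply: xy_gt0.
  by exists k; rewrite !tnth_mktuple (_ : rshift m k = t) //; apply: val_inj.
Qed.

Lemma char_adj_prodP_gt0 n (v w : V n) : char_adj P f g v w ->
  exists yn, [/\ gmap g yn = v.2, w.2 = v.2, 0 < prodP P v.1 yn, 0 < prodP P w.1 yn &
    exists t, f (tnth v.1 t) (tnth yn t) != f (tnth w.1 t) (tnth yn t)].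
Proof.
move=> [z_eq [yn [g_yn [xy_gt0 f_neq]]]]; exists yn; split=> //; apply/prodP_gt0 => t;
  by have := xy_gt0 t; rewrite mulr_ge0_gt0 // => /andP[].
Qed.

Lemma zero_error_code_separates n phi_e phi_d (v w : V n) :
  is_zero_error_code P f g phi_e phi_d -> char_adj P f g v w -> phi_e v != phi_e w.
Proof.
move=> [_ dec] /char_adj_prodP_gt0 [yn [g_yn z_eq v_gt0 w_gt0 [t f_neq]]].
apply: contra_neq f_neq => e_eq.
have v_eq : (v.1, gmap g yn) = v by rewrite g_yn -surjective_pairing.
have w_eq : (w.1, gmap g yn) = w by rewrite g_yn -z_eq -surjective_pairing.
have := dec v.1 yn v_gt0; rewrite v_eq e_eq -w_eq dec // => /(congr1 (fun u => tnth u t)).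
by rewrite !tnth_mktuple.
Qed.

Lemma char_graph_entropy_le_mean_length n phi_e phi_d :
  is_zero_error_code P f g phi_e phi_d ->
  char_graph_entropy P f g n <= \sum_(v : V n) char_dist P g v * (size (phi_e v))%:R.
Proof.
move=> code.
pose c (v : V n) : seq_sub (codom phi_e) := SeqSub (codom_f phi_e v).
have c_col : is_coloring (char_adj P f g (n := n)) c.
  move=> i v w; rewrite !inE => /eqP v_i /eqP w_i /(zero_error_code_separates code).
  by rewrite -[phi_e v]/(val (c v)) -[phi_e w]/(val (c w)) v_i w_i eqxx.
apply: le_trans (chromatic_entropy_le (@char_dist_ge0 n) (sum_char_dist n) c_col) _.
have val_pf : prefix_free (codom (@ssval _ (codom phi_e))).
  move=> _ _ /codomP [a ->] /codomP [b ->] /=.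
  by case/codomP: (ssvalP a) => [u ->]; case/codomP: (ssvalP b) => [w ->]; apply: code.1.
apply: le_trans (entropy_le_mean_length (push_ge0 (@char_dist_ge0 n) c) _ val_inj val_pf) _.
  by apply: sum_push; apply: sum_char_dist.
by rewrite sum_push_mul.
Qed.

Lemma char_graph_entropy_ge0 n : 0 <= char_graph_entropy P f g n.
Proof.
exact: chromatic_entropy_ge0 (@char_dist_ge0 n) (sum_char_dist n) (@char_adj_irrefl n).
Qed.

Lemma pair_coloring m n (C1 C2 : finType) (c1 : V m -> C1) (c2 : V n -> C2) :
  is_coloring (char_adj P f g (n := m)) c1 -> is_coloring (char_adj P f g (n := n)) c2 ->
  is_coloring (char_adj P f g (n := m + n)) (fun v => (c1 (lvertex v), c2 (rvertex v))).
Proof.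
move=> c1_col c2_col i v w; rewrite !inE => /eqP v_i /eqP w_i.
have [w1_eq w2_eq] : (c1 (lvertex w), c2 (rvertex w)) = (c1 (lvertex v), c2 (rvertex v)).
  by rewrite v_i w_i.
case/char_adj_split => adj.
  by apply: (c1_col (c1 (lvertex v)) _ _ _ _ adj); rewrite inE ?w1_eq.
by apply: (c2_col (c2 (rvertex v)) _ _ _ _ adj); rewrite inE ?w2_eq.
Qed.

Lemma push_pair_coloring m n (C1 C2 : finType) (c1 : V m -> C1) (c2 : V n -> C2) :
  push (char_dist P g (n := m + n)) (fun v => (c1 (lvertex v), c2 (rvertex v))) =
  (fun p => push (char_dist P g (n := m)) c1 p.1 * push (char_dist P g (n := n)) c2 p.2).
Proof.
apply: funext => -[i j]; rewrite /push big_mkcond sum_vertex_cat /=.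
rewrite [in RHS]big_mkcond [X in _ = _ * X]big_mkcond big_distrl /=.
apply: eq_bigr => v1 _; rewrite big_distrr /=; apply: eq_bigr => v2 _.
rewrite lvertex_cat rvertex_cat char_dist_cat xpair_eqE.
by case: (c1 v1 == i); case: (c2 v2 == j); rewrite ?mulr0 ?mul0r.
Qed.

Lemma char_graph_entropy_subadd m n :
  char_graph_entropy P f g (m + n) <= char_graph_entropy P f g m + char_graph_entropy P f g n.
Proof.
apply/ler_addgt0Pr => e e_gt0; have e2_gt0 : 0 < e / 2 by rewrite divr_gt0.
have [C1 [c1 [c1_col c1_lt]]] :=
  chromatic_entropy_approx (char_dist P g (n := m)) (@char_adj_irrefl m) e2_gt0.
have [C2 [c2 [c2_col c2_lt]]] :=
  chromatic_entropy_approx (char_dist P g (n := n)) (@char_adj_irrefl n) e2_gt0.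
have := chromatic_entropy_le (@char_dist_ge0 _) (sum_char_dist _)
  (pair_coloring c1_col c2_col).
rewrite push_pair_coloring entropy_prod => [|i|i||]; last 4 first.
- by apply: push_ge0 => v; apply: char_dist_ge0.
- by apply: push_ge0 => v; apply: char_dist_ge0.
- by apply: sum_push; apply: sum_char_dist.
- by apply: sum_push; apply: sum_char_dist.
move: c1_lt c2_lt; rewrite /char_graph_entropy.
set h1 := entropy _; set h2 := entropy _; set H1 := chromatic_entropy _ _; lra.
Qed.

End Source.

Fixpoint bits (w a : nat) : seq bool := if w is w'.+1 then odd a :: bits w' a./2 else [::].

Lemma size_bits w a : size (bits w a) = w.
Proof. by elim: w a => //= w IH a; rewrite IH. Qed.

Lemma bits_inj w a b : (a < 2 ^ w)%N -> (b < 2 ^ w)%N -> bits w a = bits w b -> a = b.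
Proof.
elim: w a b => [|w IH] a b /=; first by rewrite expn0; case: a; case: b.
move=> a_lt b_lt [odd_eq half_eq].
have a2_lt : (a./2 < 2 ^ w)%N by rewrite ltn_half_double -mul2n -expnS.
have b2_lt : (b./2 < 2 ^ w)%N by rewrite ltn_half_double -mul2n -expnS.
by rewrite -(odd_double_half a) -(odd_double_half b) odd_eq (IH _ _ a2_lt b2_lt half_eq).
Qed.

Section ShannonCode.
Variables (R : realType) (C : finType) (q : C -> R).
Hypothesis q_ge0 : forall i, 0 <= q i.
Hypothesis q_sum : \sum_i q i = 1.

Definition shannon_len i : nat := if 0 < q i then (Num.truncn (- log2 (q i))).+1 else 0.

Definition len_class k := [seq j <- enum C | (0 < q j) && (shannon_len j == k)].

Definition len_rank i := index i (len_class (shannon_len i)).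

(* The [B]-bit length header tells the decoder where the codeword ends, which makes the
   code prefix-free. *)
Definition shannon_code B i := bits B (shannon_len i) ++ bits (shannon_len i) (len_rank i).

Lemma exp2V_shannon_len_lt i : 0 < q i -> ((2 : R) ^+ shannon_len i)^-1 < q i.
Proof.
move=> q_gt0; rewrite -ltr_ln ?posrE ?invr_gt0 ?exprn_gt0 //.
rewrite lnV ?posrE ?exprn_gt0 // lnXn // /shannon_len q_gt0.
have ln2_pos := @ln2_gt0 R.
have -> : ln (q i) = log2 (q i) * ln 2 by rewrite /log2 divfK // lt0r_neq0.
by rewrite -[ln 2 *+ _]mulr_natl -mulNr ltr_pM2r // ltrNl truncnS_gt.
Qed.

Lemma shannon_len_le i : 0 < q i -> (shannon_len i)%:R <= - log2 (q i) + 1.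
Proof.
move=> q_gt0; have q_le1 : q i <= 1.
  by rewrite -q_sum (bigD1 i) //= lerDl sumr_ge0.
by rewrite /shannon_len q_gt0 -natr1 lerD2r truncn_le oppr_ge0 log2_le0.
Qed.

Lemma size_len_class k : (size (len_class k) <= 2 ^ k)%N.
Proof.
have class_le1 : \sum_(j <- len_class k) q j <= 1.
  rewrite -q_sum big_filter big_enum_cond /= big_mkcond [leRHS]big_mkcond /=.
  by apply: ler_sum => j _; case: ifP.
have class_ge : ((2 : R) ^+ k)^-1 *+ size (len_class k) <= \sum_(j <- len_class k) q j.
  rewrite -[X in X <= _]iter_addr_0 -(count_predT (len_class k)) -big_const_seq.
  rewrite big_seq [leRHS]big_seq; apply: ler_sum => j.
  by rewrite mem_filter => /andP[/andP[q_gt0 /eqP <-] _]; apply/ltW/exp2V_shannon_len_lt.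
have := le_trans class_ge class_le1.
by rewrite -[_ *+ size _]mulr_natr mulrC ler_pdivrMr ?exprn_gt0 // mul1r -natrX ler_nat.
Qed.

Lemma mem_len_class i : 0 < q i -> i \in len_class (shannon_len i).
Proof. by move=> q_gt0; rewrite mem_filter q_gt0 eqxx mem_enum. Qed.

Lemma len_rank_lt i : 0 < q i -> (len_rank i < 2 ^ shannon_len i)%N.
Proof.
by move=> q_gt0; rewrite (leq_trans _ (size_len_class _)) // index_mem mem_len_class.
Qed.

Variable B : nat.
Hypothesis shannon_len_lt : forall i, (shannon_len i < 2 ^ B)%N.

Lemma shannon_code_prefix_free : prefix_free_image (shannon_code B).
Proof.
move=> i j; rewrite /shannon_code prefix_catr ?size_bits // => /andP[/eqP len_eq].
have {}len_eq : shannon_len i = shannon_len j by apply: bits_inj len_eq.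
rewrite -len_eq => /prefixP [s rank_eq].
have /eqP : size (bits (shannon_len i) (len_rank j)) =
    size (bits (shannon_len i) (len_rank i) ++ s) by rewrite rank_eq.
rewrite size_cat !size_bits -{1}[shannon_len i]addn0 eqn_add2l eq_sym size_eq0 => /eqP s0.
by rewrite rank_eq s0 cats0.
Qed.

Lemma shannon_code_inj i j :
  0 < q i -> 0 < q j -> shannon_code B i = shannon_code B j -> i = j.
Proof.
move=> qi_gt0 qj_gt0 /eqP; rewrite /shannon_code eqseq_cat ?size_bits //.
case/andP => /eqP /bits_inj len_eq /eqP rank_eq.
have {}len_eq : shannon_len i = shannon_len j by apply: len_eq.
move: rank_eq; rewrite -len_eq => rank_eq.
have {}rank_eq : len_rank i = len_rank j.
  apply: bits_inj rank_eq; first exact: len_rank_lt.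
  by rewrite len_eq; apply: len_rank_lt.
have j_cls := mem_len_class qj_gt0; have i_cls := mem_len_class qi_gt0.
rewrite /len_rank len_eq in rank_eq i_cls.
by rewrite -(nth_index i i_cls) rank_eq nth_index.
Qed.

Lemma mean_shannon_code_length :
  \sum_i q i * (size (shannon_code B i))%:R <= entropy q + B%:R + 1.
Proof.
under eq_bigr => i _ do rewrite size_cat !size_bits natrD mulrDr.
rewrite big_split /= -big_distrl /= q_sum mul1r.
suff len_le : \sum_i q i * (shannon_len i)%:R <= entropy q + 1.
  by move: len_le; set S := \sum_i _; set H := entropy q; lra.
have -> : entropy q + 1 = \sum_i (- xlog2x (q i) + q i).
  by rewrite big_split /= q_sum entropyE sumrN.
apply: ler_sum => i _; rewrite /xlog2x; case: ifPn => [q_gt0|].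
  apply: le_trans (ler_wpM2l (q_ge0 i) (shannon_len_le q_gt0)) _.
  by rewrite mulrDr mulr1 mulrN.
by rewrite /shannon_len => /negPf ->; rewrite mulr0 oppr0 add0r.
Qed.

End ShannonCode.

Section ColoringCode.
Variables (R : realType) (X Y U Z : finType) (P : X -> Y -> R) (f : X -> Y -> U) (g : Y -> Z).
Hypothesis P_ge0 : forall x y, 0 <= P x y.
Hypothesis P_sum : \sum_x \sum_y P x y = 1.
Variables (n : nat) (C : finType) (c : n.-tuple X * n.-tuple Z -> C).
Hypothesis c_col : is_coloring (char_adj P f g (n := n)) c.
Variables (B : nat) (xd : n.-tuple X).

Local Notation q := (push (char_dist P g (n := n)) c).

Definition coloring_enc v := shannon_code q B (c v).

Definition coloring_dec (yn : n.-tuple Y) (w : seq bool) : n.-tuple U :=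
  if [pick xn | (0 < prodP P xn yn) && (coloring_enc (xn, gmap g yn) == w)] is Some xn
  then Defs.fmap f xn yn else Defs.fmap f xd yn.

Lemma push_char_dist_ge0 i : 0 <= q i.
Proof. by apply: push_ge0 => v; apply: char_dist_ge0. Qed.

Lemma sum_push_char_dist : \sum_i q i = 1.
Proof. by apply: sum_push; apply: sum_char_dist. Qed.

Lemma push_coloring_gt0 v yn : gmap g yn = v.2 -> 0 < prodP P v.1 yn -> 0 < q (c v).
Proof.
move=> g_yn xy_gt0; have := char_dist_gt0 P_ge0 g_yn xy_gt0.
rewrite /push (bigD1 v) //=; move/lt_le_trans; apply.
by rewrite lerDl sumr_ge0 // => w _; apply: char_dist_ge0.
Qed.

Hypothesis shannon_len_lt : forall i, (shannon_len q i < 2 ^ B)%N.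

Lemma coloring_code_zero_error : is_zero_error_code P f g coloring_enc coloring_dec.
Proof.
split=> [v w|xn yn xy_gt0].
  exact: (@shannon_code_prefix_free _ _ _ _ shannon_len_lt (c v) (c w)).
rewrite /coloring_dec; case: pickP => [x' /andP[x'y_gt0 /eqP enc_eq] | no_pick]; last first.
  by have := no_pick xn; rewrite xy_gt0 eqxx.
have same_color : c (x', gmap g yn) = c (xn, gmap g yn).
  apply: (shannon_code_inj push_char_dist_ge0 sum_push_char_dist shannon_len_lt _ _ enc_eq);
  exact: push_coloring_gt0.
have not_adj : ~ char_adj P f g (x', gmap g yn) (xn, gmap g yn).
  by apply: (c_col (i := c (xn, gmap g yn))); rewrite inE ?same_color.
apply: eq_from_tnth => t; rewrite !tnth_mktuple; apply/eqP/negPn/negP => f_neq.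
apply: not_adj; split=> //; exists yn; split=> //; split; last by exists t.
move=> t'; apply: mulr_gt0;
  by [move/(prodP_gt0 P_ge0): x'y_gt0 | move/(prodP_gt0 P_ge0): xy_gt0].
Qed.

Lemma coloring_code_mean_length :
  \sum_v char_dist P g v * (size (coloring_enc v))%:R <= entropy q + B%:R + 1.
Proof.
rewrite -(sum_push_mul _ c (fun i => (size (shannon_code q B i))%:R)).
exact: mean_shannon_code_length push_char_dist_ge0 sum_push_char_dist _.
Qed.

End ColoringCode.

Lemma sqr_le_exp2 t : (4 <= t)%N -> (t * t <= 2 ^ t)%N.
Proof.
elim: t => [//|t IH]; rewrite leq_eqVlt => /predU1P[<- //|t_ge4].
by have := IH t_ge4; rewrite expnS; nia.
Qed.

Lemma linear_lt_exp2 a b : exists T, forall t, (T <= t)%N -> (a * t + b < 2 ^ t)%N.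
Proof.
exists (a + b + 4) => t t_ge; apply: leq_trans (sqr_le_exp2 _); last by lia.
by nia.
Qed.

Lemma trunc_log_sublinear K c M : (0 < K)%N ->
  exists N, forall n, (N <= n)%N -> ((trunc_log 2 (n * K + 1) + c) * M <= n)%N.
Proof.
move=> K_gt0; have [T T_ok] := linear_lt_exp2 (M * K) (c * M * K + 1).
exists ((T + c) * M) => n n_ge; set t := trunc_log 2 (n * K + 1).
have [t_lt|t_ge] := ltnP t T.
  by apply: leq_trans n_ge; rewrite leq_mul2r leq_add2r ltnW ?orbT.
have exp_le : (2 ^ t <= n * K + 1)%N by apply: trunc_logP; lia.
have : ((t + c) * M * K < n * K)%N by have := T_ok t t_ge; nia.
by rewrite ltn_mul2r => /andP[_ /ltnW].
Qed.

Lemma cvg_trunc_log_div (R : realType) K c : (0 < K)%N ->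
  (fun n : nat => (trunc_log 2 (n * K + 1) + c)%:R / n%:R : R) @ \oo --> 0.
Proof.
move=> K_gt0; apply/cvgrPdist_le => e e_gt0.
set M := (Num.truncn e^-1).+1.
have M_gt0 : 0 < M%:R :> R by rewrite ltr0n.
have Minv_le : M%:R^-1 <= e.
  by rewrite -[e]invrK lef_pV2 ?posrE ?invr_gt0 // ltW // truncnS_gt.
have [N N_ok] := trunc_log_sublinear c M K_gt0.
near=> n.
have n_gt0 : 0 < n%:R :> R by rewrite ltr0n; near: n; exists 1%N.
rewrite sub0r normrN ger0_norm ?divr_ge0 // ler_pdivrMr //.
apply: le_trans (_ : n%:R / M%:R <= _).
  by rewrite ler_pdivlMr // -natrM ler_nat N_ok //; near: n; exists N.
by rewrite [leRHS]mulrC ler_pM2l.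
Unshelve. all: end_near.
Qed.

Lemma exists_pos_lower_bound (R : realDomainType) (T : finType) (F : T -> R) :
  exists2 m : R, 0 < m & forall t, 0 < F t -> m <= F t.
Proof.
exists (\big[Order.min/1]_(t | 0 < F t) F t).
  by apply: (big_ind (fun x => 0 < x)) => // x y x_gt0 y_gt0; rewrite lt_min x_gt0 y_gt0.
by move=> t F_gt0; rewrite (bigD1 t) //= ge_min lexx.
Qed.

Section Achievability.
Variables (R : realType) (X Y U Z : finType) (P : X -> Y -> R) (f : X -> Y -> U) (g : Y -> Z).
Hypothesis P_ge0 : forall x y, 0 <= P x y.
Hypothesis P_sum : \sum_x \sum_y P x y = 1.
Variable pm : R.
Hypothesis pm_gt0 : 0 < pm.
Hypothesis pm_le : forall x y, 0 < P x y -> pm <= P x y.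

Local Notation V n := (n.-tuple X * n.-tuple Z)%type.

Definition log2_bound := (Num.truncn (- log2 pm)).+1.

Lemma prodP_ge_exp n (xn : n.-tuple X) yn : 0 < prodP P xn yn -> pm ^+ n <= prodP P xn yn.
Proof.
move=> /(prodP_gt0 P_ge0) xy_gt0; rewrite /prodP -[in pm ^+ n](card_ord n) -prodr_const.
by apply: ler_prod => t _; rewrite ltW //= pm_le.
Qed.

Lemma push_char_dist_ge_exp n (C : finType) (c : V n -> C) i :
  0 < push (char_dist P g (n := n)) c i -> pm ^+ n <= push (char_dist P g (n := n)) c i.
Proof.
move=> q_gt0; have [v /andP[c_v v_gt0]] : exists v, (c v == i) && (0 < char_dist P g v).
  by apply: psumr_neq0P => [v _|]; [apply: char_dist_ge0 | apply/eqP; rewrite gt_eqF].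
have [yn /andP[g_yn xy_gt0]] : exists yn, (gmap g yn == v.2) && (0 < prodP P v.1 yn).
  by apply: psumr_neq0P => [yn _|]; [apply: prodP_ge0 | apply/eqP; rewrite gt_eqF].
apply: le_trans (prodP_ge_exp xy_gt0) _; apply: le_trans (_ : char_dist P g v <= _).
  by rewrite /char_dist (bigD1 yn) //= lerDl sumr_ge0 // => y _; apply: prodP_ge0.
by rewrite /push (bigD1 v) //= lerDl sumr_ge0 // => w _; apply: char_dist_ge0.
Qed.

Lemma shannon_len_push_le n (C : finType) (c : V n -> C) i :
  (shannon_len (push (char_dist P g (n := n)) c) i <= n * log2_bound + 1)%N.
Proof.
rewrite /shannon_len; case: ifPn => // q_gt0; rewrite addn1 ltnS truncn_le_nat.
have L2 := @ln2_gt0 R.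
have log_le : - log2 (push (char_dist P g (n := n)) c i) <= n%:R * - log2 pm.
  rewrite mulrN lerN2 /log2 mulrA ler_pM2r ?invr_gt0 // mulr_natl -lnXn //.
  by rewrite ler_ln ?posrE ?exprn_gt0 // push_char_dist_ge_exp.
apply: le_lt_trans log_le _; rewrite -addn1 natrD natrM ltr_pwDr // ler_wpM2l //.
exact/ltW/truncnS_gt.
Qed.

(* [trunc_log 2 (n * log2_bound + 1) + 1] bits of length header, one bit for rounding the
   Shannon lengths up, and one for the slack of a near-optimal coloring. *)
Definition code_overhead n := trunc_log 2 (n * log2_bound + 1) + 3.

Lemma exists_good_code n (x0 : X) : exists code,
  is_zero_error_code P f g code.1 code.2 /\
  \sum_(v : V n) char_dist P g v * (size (code.1 v))%:R <=
    char_graph_entropy P f g n + (code_overhead n)%:R.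
Proof.
have [C [c [c_col c_lt]]] :=
  chromatic_entropy_approx (char_dist P g (n := n)) (@char_adj_irrefl _ _ _ _ _ P f g n) ltr01.
set B := (trunc_log 2 (n * log2_bound + 1)).+1.
have len_lt i : (shannon_len (push (char_dist P g (n := n)) c) i < 2 ^ B)%N.
  by apply: leq_ltn_trans (shannon_len_push_le c i) (trunc_log_ltn _ _).
exists (coloring_enc P g c B, coloring_dec P f g c B [tuple x0 | _ < n]); split.
  exact (coloring_code_zero_error P_ge0 P_sum c_col _ len_lt).
refine (le_trans (coloring_code_mean_length g P_ge0 P_sum c B) _).
rewrite /code_overhead /B -addn1 !natrD; move: c_lt.
set H := entropy _; set G := char_graph_entropy _ _ _ _; set T := (trunc_log _ _)%:R.
lra.
Qed.

End Achievability.

Section OptimalRate.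
Variables (R : realType) (X Y U Z : finType) (P : X -> Y -> R) (f : X -> Y -> U) (g : Y -> Z).
Hypothesis P_ge0 : forall x y, 0 <= P x y.
Hypothesis P_sum : \sum_x \sum_y P x y = 1.
Variable L : R.
Hypothesis entropy_rate_cvg : (fun n => n%:R^-1 * char_graph_entropy P f g n) @ \oo --> L.

Lemma code_rateE n (phi : n.-tuple X * n.-tuple Z -> seq bool) :
  code_rate P g phi = n%:R^-1 * \sum_v char_dist P g v * (size (phi v))%:R.
Proof. by rewrite /code_rate (sum_char_dist_mul P g (fun v => (size (phi v))%:R)). Qed.

Lemma code_rate_ge n (phi_e : n.-tuple X * n.-tuple Z -> seq bool)
  (phi_d : n.-tuple Y -> seq bool -> n.-tuple U) : is_zero_error_code P f g phi_e phi_d ->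
  n%:R^-1 * char_graph_entropy P f g n <= code_rate P g phi_e.
Proof.
move=> code; rewrite code_rateE ler_wpM2l ?invr_ge0 //.
exact: (char_graph_entropy_le_mean_length P_ge0 P_sum code).
Qed.

Lemma achievable_ge r : achievable P f g r -> L <= r.
Proof.
move=> [phi_e [phi_d [codes rate_cvg]]]; apply: ler_cvg_to entropy_rate_cvg rate_cvg _.
by apply: nearW => n; apply: code_rate_ge.
Qed.

Lemma achievable_entropy_rate : achievable P f g L.
Proof.
have [x0 _|X_empty] := pickP (xpredT : pred X); last first.
  by move: P_sum; rewrite big_pred0 // => /esym/eqP; rewrite oner_eq0.
have [pm pm_gt0 pm_le] := exists_pos_lower_bound (fun p : X * Y => P p.1 p.2).
have good n := exists_good_code f g P_ge0 P_sum pm_gt0 (fun x y => pm_le (x, y)) n x0.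
pose code n := sval (cid (good n)); have code_ok n := svalP (cid (good n)).
exists (fun n => (code n).1), (fun n => (code n).2).
split=> [n|]; first exact: (code_ok n).1.
pose upper n := n%:R^-1 * char_graph_entropy P f g n + (code_overhead pm n)%:R / n%:R.
apply: (@squeeze_cvgr _ _ _ _ _ upper) entropy_rate_cvg _; first near=> n.
  apply/andP; split; first exact: code_rate_ge (code_ok n).1.
  rewrite code_rateE /upper [X in _ <= X + _]mulrC -mulrDl mulrC.
  by apply: ler_wpM2r; [rewrite invr_ge0 | exact: (code_ok n).2].
rewrite -[L]addr0; apply: cvgD entropy_rate_cvg _.
exact: cvg_trunc_log_div.
Unshelve. all: end_near.
Qed.

Lemma optimal_rate_entropy_rate : optimal_rate P f g = L.
Proof.
have L_ge0 : 0 <= L.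
  apply: ler_cvg_to (cvg_cst 0) entropy_rate_cvg _; apply: nearW => n.
  by rewrite mulr_ge0 ?invr_ge0 ?char_graph_entropy_ge0.
apply/eqP; rewrite eq_le; apply/andP; split.
  by apply: ge_inf; [exists 0 => r [] | split=> //; apply: achievable_entropy_rate].
apply: lb_le_inf; first by exists L; split=> //; apply: achievable_entropy_rate.
by move=> r [_ /achievable_ge].
Qed.

End OptimalRate.

Unset Implicit Arguments.

Theorem theorem1 (R : realType) (X Y U Z : finType) (P : X -> Y -> R)
  (f : X -> Y -> U) (g : Y -> Z)
  (hP : is_joint_dist P)
  (hX : forall x : X, 0 < marginalX P x)
  (hY : forall y : Y, 0 < marginalY P y) :
  (fun n : nat => (n%:R)^-1 * char_graph_entropy P f g n) @ \oo
    --> optimal_rate P f g.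
Proof.
have [P_ge0 P_sum] := hP.
have H_ge0 n : 0 <= char_graph_entropy P f g n by apply: char_graph_entropy_ge0.
have H_subadd m n : char_graph_entropy P f g (m + n) <=
    char_graph_entropy P f g m + char_graph_entropy P f g n.
  by apply: char_graph_entropy_subadd.
have H_cvg := fekete H_ge0 H_subadd.
by rewrite (optimal_rate_entropy_rate P_ge0 P_sum H_cvg).
Qed.
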